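(* Let $d$ be a circular design with $t$ treatments and $b$ blocks of length $k$. (i) If $l^*$ maximizes $c(l)$ over all sequences $l$ of length $k$ with entries in $\{1,\dots,t\}$, then under model $(\mathcal{M}1)$, $\mathrm{tr}(C_d[\phi])\le b\,c(l^* )$. (ii) If $l^*$ maximizes $\tilde c(l)$ over all such sequences, then under model $(\mathcal{M}2)$, $\mathrm{tr}(C_d[\psi])\le b\,\tilde c(l^* )$.
   Context: Designs: $t$ treatments, $b$ linear blocks; block $i$ has inner plots $j=1,\dots,k$ and border plots $j=0,k+1$; $d(i,j)$ is the treatment on plot $(i,j)$, and circularity means $d(i,0)=d(i,k)$, $d(i,k+1)=d(i,1)$. Responses $Y_{i,j}$ ($1\le i\le b$, $1\le j\le k$) are uncorrelated with common variance. Model $(\mathcal{M}1)$: $\mathbb{E}(Y)=B\beta+T_d\tau+L_d\lambda$; model $(\mathcal{M}2)$: $\mathbb{E}(Y)=B\beta+T_d\tau+L_d\lambda+R_d\rho$, where $B$ is the block incidence matrix and $T_d,L_d,R_d$ ($bk\times t$) have in row $(i,j)$ a single $1$ in column $d(i,j)$, $d(i,j-1)$, $d(i,j+1)$ respectively. Total effects: $\phi=\tau+\lambda$ in $(\mathcal{M}1)$, $\psi=\tau+\lambda+\rho$ in $(\mathcal{M}2)$; these equal $K'\alpha$ with $\alpha=(\tau',\lambda')'$, $K=\mathbf{1}_2\otimes I_t$, $A=(T_d\mid L_d)$, respectively $\alpha=(\tau',\lambda',\rho')'$, $K=\mathbf 1_3\otimes I_t$, $A=(T_d\mid L_d\mid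 R_d)$. Information matrix: with $A^+$ the Moore–Penrose inverse, $\mathrm{pr}_{(X)}=X(X'X)^+X'$, $\mathrm{pr}^\perp_{(X)}=I-\mathrm{pr}_{(X)}$, $M=I-K(K'K)^+K'$, $X_1=AK(K'K)^+$, $X_2=(AM\mid B)$, the information matrix for $K'\alpha$ is $X_1'\mathrm{pr}^\perp_{(X_2)}X_1$; this gives $C_d[\phi]$ and $C_d[\psi]$. For a sequence $l=(l_1,\dots,l_k)$ with entries in $\{1,\dots,t\}$, put $l_0=l_k$, $l_{k+1}=l_1$; $n_i$ = number of occurrences of $i$ in $l$; $m_i$ = number of $j\in\{1,\dots,k\}$ with $l_{j-1}=l_j=i$; $p_i$ = number of $j\in\{1,\dots,k\}$ with $l_{j-1}=l_{j+1}=i$. Define $c(l)=\frac12\big(k-\frac2k\sum_i n_i^2+\sum_i m_i\big)$ and $\tilde c(l)=\frac19\big(3k-\frac9k\sum_i n_i^2+4\sum_i m_i+2\sum_i p_i\big)$. *)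

From HB Require Import structures.
From mathcomp Require Import all_boot all_order all_algebra.
From Stdlib Require Import ClassicalEpsilon.
Set Implicit Arguments. Unset Strict Implicit. Unset Printing Implicit Defensive.
Import Order.TTheory GRing.Theory Num.Theory.
Local Open Scope ring_scope.

Section Defs.
Variable R : realFieldType.

Definition penrose m n (A : 'M[R]_(m, n)) (G : 'M[R]_(n, m)) : Prop :=
  [/\ A *m G *m A = A, G *m A *m G = G, (A *m G)^T = A *m G & (G *m A)^T = G *m A].

Definition mpinv m n (A : 'M[R]_(m, n)) : 'M[R]_(n, m) :=
  match excluded_middle_informative (exists G, penrose A G) with
  | left e => proj1_sig (constructive_indefinite_description _ e)
  | right _ => 0
  end.

Definition pr m n (X : 'M[R]_(m, n)) : 'M[R]_m := X *m mpinv (X^T *m X) *m X^T.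
Definition prp m n (X : 'M[R]_(m, n)) : 'M[R]_m := 1%:M - pr X.

(* Information matrix for K' alpha in E(Y) = B beta + A alpha *)
Definition info_mx N p t b (A : 'M[R]_(N, p)) (K : 'M[R]_(p, t)) (B : 'M[R]_(N, b))
  : 'M[R]_t :=
  let M := 1%:M - K *m mpinv (K^T *m K) *m K^T in
  let X1 := A *m K *m mpinv (K^T *m K) in
  let X2 := row_mx (A *m M) B in
  X1^T *m prp X2 *m X1.
End Defs.

(* Plots: row r of the (b*k)-dimensional response vector is plot (r / k, r mod k). *)
Lemma blk_subproof b k (r : 'I_(b * k)) : (r %/ k < b)%N.
Proof.
case: r => r /=; case: k => [|k]; first by rewrite muln0.
by rewrite ltn_divLR.
Qed.
Lemma pos_subproof b k (r : 'I_(b * k)) : (r %% k < k)%N.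
Proof.
case: r => r /=; case: k => [|k]; first by rewrite muln0.
by rewrite ltn_pmod.
Qed.
Definition blk b k (r : 'I_(b * k)) : 'I_b := Ordinal (blk_subproof r).
Definition pos b k (r : 'I_(b * k)) : 'I_k := Ordinal (pos_subproof r).

(* A circular design: d i j is the treatment on inner plot (i,j) (0-based);
   circularity: left neighbour of plot j is plot (j-1 mod k), right is (j+1 mod k). *)
Definition design t b k := 'I_b -> 'I_k -> 'I_t.

Section Mats.
Variables (R : realFieldType) (t b k : nat) (d : design t b k).
Local Open Scope ring_scope.
Definition Bmx : 'M[R]_(b * k, b) := \matrix_(r, i) ((blk r == i)%:R).
Definition Tmx : 'M[R]_(b * k, t) := \matrix_(r, c) ((d (blk r) (pos r) == c)%:R).
Definition Lmx : 'M[R]_(b * k, t) :=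
  \matrix_(r, c) ((d (blk r) (ord_pred (pos r)) == c)%:R).
Definition Rmx : 'M[R]_(b * k, t) :=
  \matrix_(r, c) ((d (blk r) (ordS (pos r)) == c)%:R).

(* model M1: alpha = (tau', lambda')', K = 1_2 (x) I_t *)
Definition C_phi : 'M[R]_t :=
  info_mx (row_mx Tmx Lmx) (col_mx (1%:M : 'M[R]_t) 1%:M) Bmx.
(* model M2: alpha = (tau', lambda', rho')', K = 1_3 (x) I_t *)
Definition C_psi : 'M[R]_t :=
  info_mx (row_mx (row_mx Tmx Lmx) Rmx)
          (col_mx (col_mx (1%:M : 'M[R]_t) 1%:M) 1%:M) Bmx.
End Mats.

(* Sequences l = (l_1..l_k), stored 0-based; l_0 = l_k, l_{k+1} = l_1 via cyclic pred/succ. *)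
Section Seqs.
Variables (t k : nat) (l : k.-tuple 'I_t).
Definition nocc (i : 'I_t) : nat := count_mem i l.
Definition mocc (i : 'I_t) : nat :=
  #|[set j : 'I_k | (tnth l (ord_pred j) == i) && (tnth l j == i)]|.
Definition pocc (i : 'I_t) : nat :=
  #|[set j : 'I_k | (tnth l (ord_pred j) == i) && (tnth l (ordS j) == i)]|.

Local Open Scope ring_scope.
Definition cval (R : realFieldType) : R :=
  2^-1 * (k%:R - 2 / k%:R * (\sum_i (nocc i)%:R ^+ 2) + \sum_i (mocc i)%:R).
Definition ctval (R : realFieldType) : R :=
  9^-1 * (3 * k%:R - 9 / k%:R * (\sum_i (nocc i)%:R ^+ 2)
          + 4 * \sum_i (mocc i)%:R + 2 * \sum_i (pocc i)%:R).
End Seqs.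

From HB Require Import structures.
From mathcomp Require Import all_boot all_order all_algebra perm.
From mathcomp Require Import zify ring.
From Stdlib Require Import ClassicalEpsilon.
Import Order.TTheory GRing.Theory Num.Theory.
Local Open Scope ring_scope.
Set Implicit Arguments. Unset Strict Implicit. Unset Printing Implicit Defensive.

(* The column space of [X2] contains that of the block matrix [B], so the
   residual projection [I - pr_(X2)] is dominated by the projection [I - Q]
   onto within-block contrasts, where [Q = B B' / k] averages over blocks.
   Hence [tr C_d] is at most the within-block sum of squares of the rows of
   [X1 = A K (K'K)^+].  In (M1) the row of plot (i,j) is the mean of the
   treatment indicators of [d(i,j)] and [d(i,j-1)], in (M2) also of
   [d(i,j+1)]; the within-block sum of squares of such rows counts the
   coincidences between neighbours and equals [c] (resp. [c~]) of the
   sequence [d(i,.)].  Summing over the [b] blocks gives the bound. *)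

Section Projections.
Variable R : realFieldType.

Lemma tr_mulTmx_ge0 m n (W : 'M[R]_(m, n)) : 0 <= \tr (W^T *m W).
Proof.
apply: sumr_ge0 => i _; rewrite !mxE; apply: sumr_ge0 => j _.
by rewrite mxE -expr2 sqr_ge0.
Qed.

Lemma mulmx_trmx_eq0 m n (W : 'M[R]_(m, n)) : W *m W^T = 0 -> W = 0.
Proof.
move=> WWt0; apply/matrixP => i j; rewrite mxE.
have := congr1 (fun M : 'M[R]_m => M i i) WWt0; rewrite !mxE => /psumr_eq0P sq0.
apply/eqP; rewrite -sqrf_eq0 expr2; apply/eqP.
by have := sq0 _ j isT; rewrite mxE -expr2; apply=> l _; rewrite mxE -expr2 sqr_ge0.
Qed.

Lemma row_free_gram_unit r n (F : 'M[R]_(r, n)) : row_free F -> F *m F^T \in unitmx.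
Proof.
move=> freeF; rewrite -row_free_unit -kermx_eq0; apply/eqP.
set K := kermx _.
have KFFt : K *m (F *m F^T) = 0 by apply/sub_kermxP.
have : (K *m F) *m (K *m F)^T = 0.
  by rewrite trmx_mul !mulmxA -(mulmxA K) KFFt mul0mx.
by move/mulmx_trmx_eq0/eqP; rewrite mulmx_free_eq0 // => /eqP.
Qed.

(* Full-rank factorisation [A = C F]: then [F' (F F')^-1 (C'C)^-1 C'] works. *)
Lemma penrose_exists m n (A : 'M[R]_(m, n)) : exists G, penrose A G.
Proof.
have freeCt : row_free (col_base A)^T.
  by rewrite /row_free mxrank_tr; exact: col_base_full.
move: (col_base A) (row_base A) (mulmx_base A) freeCt (row_base_free A).
move=> C F defA freeCt freeF; rewrite -defA.
have CtC_unit := row_free_gram_unit freeCt; rewrite trmxK in CtC_unit.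
have FFt_unit := row_free_gram_unit freeF.
set U := invmx (F *m F^T); set V := invmx (C^T *m C).
exists (F^T *m U *m V *m C^T).
have UT : U^T = U by rewrite /U trmx_inv trmx_mul trmxK.
have VT : V^T = V by rewrite /V trmx_inv trmx_mul trmxK.
have AG : C *m F *m (F^T *m U *m V *m C^T) = C *m V *m C^T.
  by rewrite !mulmxA -(mulmxA C F F^T) -(mulmxA C _ U) mulmxV // mulmx1.
have GA : (F^T *m U *m V *m C^T) *m (C *m F) = F^T *m U *m F.
  by rewrite !mulmxA -(mulmxA _ C^T C) -(mulmxA _ V (C^T *m C)) mulVmx // mulmx1.
split.
- by rewrite AG !mulmxA -(mulmxA _ C^T C) -(mulmxA C V) mulVmx // mulmx1.
- by rewrite GA !mulmxA -(mulmxA _ F F^T) -(mulmxA _ (F *m F^T) U) mulmxV // mulmx1.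
- by rewrite AG !trmx_mul trmxK VT mulmxA.
- by rewrite GA !trmx_mul trmxK UT mulmxA.
Qed.

Lemma mpinvP m n (A : 'M[R]_(m, n)) : penrose A (mpinv A).
Proof.
rewrite /mpinv; case: excluded_middle_informative => [e|[]]; last exact: penrose_exists.
exact: proj2_sig (constructive_indefinite_description _ e).
Qed.

Lemma mpinv_scalar q (a : R) : a != 0 -> mpinv (a%:M : 'M[R]_q) = a^-1%:M.
Proof.
move=> a0; have [aGa _ _ _] := mpinvP (a%:M : 'M[R]_q).
move: aGa; rewrite mul_scalar_mx -scalemxAl mul_mx_scalar scalerA => aaG.
have := congr1 (fun M => (a * a)^-1 *: M) aaG.
rewrite scalerA mulVf ?mulf_neq0 // scale1r => ->.
by rewrite -mul_scalar_mx -scalar_mxM invfM -mulrA mulVf // mulr1.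
Qed.

Lemma gram_ginvK N q (X : 'M[R]_(N, q)) (H : 'M[R]_q) :
  (X^T *m X) *m H *m (X^T *m X) = X^T *m X -> X *m H *m (X^T *m X) = X.
Proof.
move=> SHS; set S := X^T *m X; set E := X *m (H *m S - 1%:M).
have SE : S *m (H *m S - 1%:M) = 0 by rewrite mulmxBr mulmxA SHS mulmx1 subrr.
have : E^T *m E^T^T = 0.
  by rewrite trmxK /E trmx_mul -mulmxA (mulmxA X^T) -/S SE mulmx0.
move/mulmx_trmx_eq0/eqP; rewrite trmx_eq0 /E mulmxBr mulmx1 subr_eq0 mulmxA.
by move/eqP.
Qed.

Lemma pr_proj N q (X : 'M[R]_(N, q)) :
  [/\ (pr X)^T = pr X, pr X *m pr X = pr X & pr X *m X = X].
Proof.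
have [SGS _ _ _] := mpinvP (X^T *m X).
have SGtS : (X^T *m X) *m (mpinv (X^T *m X))^T *m (X^T *m X) = X^T *m X.
  by have := congr1 trmx SGS; rewrite !trmx_mul !trmxK mulmxA.
have PX : pr X *m X = X by rewrite /pr -mulmxA gram_ginvK.
have PtX : (pr X)^T *m X = X.
  by rewrite /pr !trmx_mul trmxK (mulmxA X) -mulmxA gram_ginvK.
have PtP : (pr X)^T *m pr X = pr X by rewrite {2}/pr !mulmxA PtX.
split=> //; last by rewrite {1}/pr !mulmxA PX.
by rewrite -PtP trmx_mul trmxK PtP.
Qed.

(* For orthogonal projections with [range Q <= range P], [P - Q] is itself an
   orthogonal projection, hence has a nonnegative quadratic trace. *)
Lemma tr_compl_proj_le N p (P Q : 'M[R]_N) (Y : 'M[R]_(N, p)) :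
  P^T = P -> P *m P = P -> Q^T = Q -> Q *m Q = Q -> P *m Q = Q ->
  \tr (Y^T *m (1%:M - P) *m Y) <= \tr (Y^T *m (1%:M - Q) *m Y).
Proof.
move=> PT PP QT QQ PQ.
have QP : Q *m P = Q by rewrite -{1}QT -PT -trmx_mul PQ QT.
rewrite -subr_ge0 -linearB /= -mulmxBl -mulmxBr.
have -> : (1%:M - Q) - (1%:M - P) = (P - Q)^T *m (P - Q).
  rewrite (linearB trmx) /= PT QT mulmxBl !mulmxBr PP PQ QP QQ.
  by rewrite subrr subr0 opprB addrC addrA subrK.
by rewrite mulmxA -trmx_mul -mulmxA tr_mulTmx_ge0.
Qed.

End Projections.

Lemma plot_index_subproof b k (i : 'I_b) (j : 'I_k) : (i * k + j < b * k)%N.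
Proof. case: i j => [i ltib] [j ltjk] /=; nia. Qed.

Definition plot_index b k (p : 'I_b * 'I_k) : 'I_(b * k) :=
  Ordinal (plot_index_subproof p.1 p.2).

Lemma blk_plot_index b k p : blk (@plot_index b k p) = p.1.
Proof.
case: p => [[i ltib] [j ltjk]]; apply/val_inj => /=.
rewrite divnDl ?dvdn_mull // mulnK; last by case: k ltjk.
by rewrite divn_small // addn0.
Qed.

Lemma pos_plot_index b k p : pos (@plot_index b k p) = p.2.
Proof. by case: p => [[i ltib] [j ltjk]]; apply/val_inj; rewrite /= modnMDl modn_small. Qed.

Lemma plot_indexK b k r : plot_index (@blk b k r, pos r) = r.
Proof. by apply/val_inj; rewrite /= -divn_eq. Qed.

Section BlockMeans.
Variables (R : realFieldType) (b k : nat).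

Lemma sum_plots (F : 'I_b -> 'I_k -> R) :
  \sum_(r < b * k) F (blk r) (pos r) = \sum_i \sum_j F i j.
Proof.
rewrite pair_bigA /= (reindex (@plot_index b k)) /=.
  by apply: eq_bigr => -[i j] _; rewrite blk_plot_index pos_plot_index.
exists (fun r => (blk r, pos r)) => [p _|r _]; last exact: plot_indexK.
by rewrite blk_plot_index pos_plot_index; case: p.
Qed.

Lemma sum_blk_eq i (F : 'I_b -> 'I_k -> R) :
  \sum_(r < b * k) (blk r == i)%:R * F (blk r) (pos r) = \sum_j F i j.
Proof.
rewrite (sum_plots (fun i' j => (i' == i)%:R * F i' j)) (bigD1 i) //=.
rewrite [X in _ + X]big1 => [|i' /negbTE i'i].
  by rewrite addr0; apply: eq_bigr => j _; rewrite eqxx mul1r.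
by apply: big1 => j _; rewrite i'i mul0r.
Qed.

Lemma trmx_Bmx_mul : (Bmx R b k)^T *m Bmx R b k = (k%:R : R)%:M.
Proof.
apply/matrixP => i i'; rewrite !mxE.
under eq_bigr do rewrite !mxE.
rewrite (sum_blk_eq i (fun x _ => (x == i')%:R)) sumr_const card_ord.
by case: (i == i'); rewrite ?mulr1n ?mulr0n ?mul0rn.
Qed.

Definition block_mean_proj : 'M[R]_(b * k) :=
  k%:R^-1 *: (Bmx R b k *m (Bmx R b k)^T).
Local Notation Q := block_mean_proj.

Lemma block_mean_projP :
  [/\ Q^T = Q, Q *m Q = Q &
      forall P : 'M[R]_(b * k), P *m Bmx R b k = Bmx R b k -> P *m Q = Q].
Proof.
split.
- by rewrite /Q linearZ /= trmx_mul trmxK.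
- rewrite /Q -scalemxAl -scalemxAr scalerA mulmxA -(mulmxA _ _ (Bmx R b k)).
  rewrite trmx_Bmx_mul mul_mx_scalar -scalemxAl scalerA -mulrA.
  (* for [k = 0] both sides vanish, as [0^-1 = 0] *)
  by have [->|k0] := eqVneq (k%:R : R) 0; rewrite ?invr0 ?mul0r // mulVf ?mulr1.
- by move=> P PB; rewrite /Q -scalemxAr mulmxA PB.
Qed.

Lemma tr_info_mx_le_within p t (A : 'M[R]_(b * k, p)) (K : 'M[R]_(p, t)) :
  let X1 := A *m K *m mpinv (K^T *m K) in
  \tr (info_mx A K (Bmx R b k)) <= \tr (X1^T *m (1%:M - Q) *m X1).
Proof.
rewrite /info_mx /prp; set X2 := row_mx _ _.
have [PT PP PX] := pr_proj X2; have [QT QQ fixQ] := block_mean_projP.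
apply: tr_compl_proj_le => //; apply: fixQ.
by move: PX; rewrite /X2 mul_mx_row => /eq_row_mx [].
Qed.

Definition within_block_ss t (g : 'I_k -> 'I_t -> R) : R :=
  \sum_j \sum_c g j c ^+ 2 - k%:R^-1 * \sum_c (\sum_j g j c) ^+ 2.

Lemma tr_within_blocks t (Y : 'M[R]_(b * k, t)) (g : 'I_b -> 'I_k -> 'I_t -> R) :
  (forall r c, Y r c = g (blk r) (pos r) c) ->
  \tr (Y^T *m (1%:M - Q) *m Y) = \sum_i within_block_ss (g i).
Proof.
move=> YE; set Z := (Bmx R b k)^T *m Y.
have ZE i c : Z i c = \sum_j g i j c.
  rewrite mxE -(sum_blk_eq i (fun i' j => g i' j c)).
  by apply: eq_bigr => r _; rewrite !mxE YE.
have trE m n (W : 'M[R]_(m, n)) : \tr (W^T *m W) = \sum_c \sum_r W r c ^+ 2.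
  by apply: eq_bigr => c _; rewrite !mxE; apply: eq_bigr => r _; rewrite mxE expr2.
rewrite mulmxBr mulmx1 mulmxBl linearB /= /Q -!scalemxAr -scalemxAl linearZ /=.
rewrite !mulmxA -(mulmxA _ _ Y) -[_ *m Bmx R b k]trmxK trmx_mul trmxK -/Z !trE.
have sqY : \sum_c \sum_r Y r c ^+ 2 = \sum_i \sum_j \sum_c g i j c ^+ 2.
  rewrite exchange_big -(sum_plots (fun i j => \sum_c g i j c ^+ 2)).
  by apply: eq_bigr => r _; apply: eq_bigr => c _; rewrite YE.
have sqZ : \sum_c \sum_i Z i c ^+ 2 = \sum_i \sum_c (\sum_j g i j c) ^+ 2.
  by rewrite exchange_big; apply: eq_bigr => i _; apply: eq_bigr => c _; rewrite ZE.
by rewrite sqY sqZ mulr_sumr -sumrB.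
Qed.

Lemma tr_info_mx_le p t (A : 'M[R]_(b * k, p)) (K : 'M[R]_(p, t))
    (g : 'I_b -> 'I_k -> 'I_t -> R) (c : R) :
  (forall r j, (A *m K *m mpinv (K^T *m K)) r j = g (blk r) (pos r) j) ->
  (forall i, within_block_ss (g i) <= c) ->
  \tr (info_mx A K (Bmx R b k)) <= b%:R * c.
Proof.
move=> X1E le_c; apply: le_trans (tr_info_mx_le_within A K) _.
have -> : b%:R * c = \sum_(i < b) c by rewrite sumr_const card_ord mulr_natl.
by rewrite (tr_within_blocks X1E); apply: ler_sum.
Qed.

End BlockMeans.

Section WithinBlock.
Variables (R : realFieldType) (t k : nat).
Implicit Types (f : 'I_k -> 'I_t) (x y c : 'I_t).

Definition mean_indicator (s : seq 'I_t) c : R :=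
  (size s)%:R^-1 * \sum_(x <- s) (x == c)%:R.

Lemma sum_indicator_mul x y : \sum_c ((x == c)%:R * (y == c)%:R : R) = (x == y)%:R.
Proof.
rewrite (bigD1 x) //= eqxx mul1r big1 ?addr0 1?eq_sym // => c /negbTE.
by rewrite eq_sym => ->; rewrite mul0r.
Qed.

Lemma sum_indicator_sqr (I : Type) (r : seq I) (g : I -> 'I_t) :
  \sum_c (\sum_(i <- r) (g i == c)%:R : R) ^+ 2 =
  \sum_(i <- r) \sum_(i' <- r) (g i == g i')%:R.
Proof.
under eq_bigr do rewrite expr2 big_distrlr.
rewrite exchange_big; apply: eq_bigr => i _.
by rewrite exchange_big; apply: eq_bigr => i' _; rewrite sum_indicator_mul.
Qed.

Lemma nocc_sum f c : ((nocc (mktuple f) c)%:R : R) = \sum_j (f j == c)%:R.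
Proof.
rewrite /nocc -sum1_count big_tuple natr_sum big_mkcond /=.
by apply: eq_bigr => j _; rewrite tnth_mktuple; case: (f j == c).
Qed.

Lemma card_set_nat (P : pred 'I_k) : (#|[set j | P j]|%:R : R) = \sum_j (P j)%:R.
Proof.
rewrite cardsE -sum1_card natr_sum big_mkcond /=.
by apply: eq_bigr => j _; rewrite unfold_in; case: (P j).
Qed.

Lemma sum_mocc f :
  \sum_c ((mocc (mktuple f) c)%:R : R) = \sum_j (f (ord_pred j) == f j)%:R.
Proof.
under eq_bigr do rewrite /mocc card_set_nat.
rewrite exchange_big; apply: eq_bigr => j _; rewrite -sum_indicator_mul.
by apply: eq_bigr => c _; rewrite !tnth_mktuple -natrM mulnb.
Qed.

Lemma sum_pocc f :
  \sum_c ((pocc (mktuple f) c)%:R : R) = \sum_j (f (ord_pred j) == f (ordS j))%:R.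
Proof.
under eq_bigr do rewrite /pocc card_set_nat.
rewrite exchange_big; apply: eq_bigr => j _; rewrite -sum_indicator_mul.
by apply: eq_bigr => c _; rewrite !tnth_mktuple -natrM mulnb.
Qed.

Definition coincidences f (s s' : {perm 'I_k}) : R := \sum_j (f (s j) == f (s' j))%:R.

(* Each [s] in [sh] permutes the plots, so every shifted sequence has the same
   replications: all block totals of the indicators equal those of [f]. *)
Lemma within_block_ss_mean f (sh : seq {perm 'I_k}) : (0 < size sh)%N ->
  within_block_ss (fun j => mean_indicator [seq f (s j) | s : {perm 'I_k} <- sh]) =
  (size sh)%:R^-1 ^+ 2 * \sum_(s <- sh) \sum_(s' <- sh) coincidences f s s'
  - k%:R^-1 * \sum_c (nocc (mktuple f) c)%:R ^+ 2.
Proof.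
move=> sh_gt0; set n := size sh.
have meanE (j : 'I_k) c : mean_indicator [seq f (s j) | s : {perm 'I_k} <- sh] c =
                 n%:R^-1 * \sum_(s <- sh) (f (s j) == c)%:R.
  by rewrite /mean_indicator size_map big_map.
have shift_nocc c (s : {perm 'I_k}) :
    \sum_j ((f (s j) == c)%:R : R) = (nocc (mktuple f) c)%:R.
  by rewrite nocc_sum [RHS](reindex_inj (@perm_inj _ s)).
rewrite /within_block_ss; congr (_ - _ * _).
  transitivity
    (\sum_j (n%:R : R)^-1 ^+ 2 * \sum_c (\sum_(s <- sh) (f (s j) == c)%:R) ^+ 2).
    apply: eq_bigr => j _; rewrite mulr_sumr.
    by apply: eq_bigr => c _; rewrite meanE exprMn.
  rewrite -mulr_sumr; congr (_ * _).
  under eq_bigr do rewrite (sum_indicator_sqr sh).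
  by rewrite exchange_big; apply: eq_bigr => s _; rewrite exchange_big.
apply: eq_bigr => c _; congr (_ ^+ 2).
under eq_bigr do rewrite meanE.
rewrite -mulr_sumr exchange_big /=.
under eq_bigr do rewrite shift_nocc.
rewrite big_const_seq count_predT iter_addr_0 -[X in _ * X]mulr_natr.
by rewrite mulrCA mulVf ?mulr1 // pnatr_eq0 -lt0n.
Qed.

Definition cyc_pred : {perm 'I_k} := perm (@ord_pred_inj k).
Definition cyc_succ : {perm 'I_k} := perm (@ordS_inj k).

Lemma coincidences_id f s : coincidences f s s = k%:R.
Proof.
by rewrite /coincidences; under eq_bigr do rewrite eqxx; rewrite sumr_const card_ord.
Qed.

Lemma coincidencesC f s s' : coincidences f s s' = coincidences f s' s.
Proof. by apply: eq_bigr => j _; rewrite eq_sym. Qed.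

Lemma coincidences_pred f :
  coincidences f 1%g cyc_pred = \sum_c (mocc (mktuple f) c)%:R.
Proof. by rewrite sum_mocc; apply: eq_bigr => j _; rewrite perm1 permE eq_sym. Qed.

Lemma coincidences_succ f :
  coincidences f 1%g cyc_succ = \sum_c (mocc (mktuple f) c)%:R.
Proof.
rewrite sum_mocc (reindex_inj (@ordS_inj k)); apply: eq_bigr => j _.
by rewrite perm1 permE ordSK.
Qed.

Lemma coincidences_pred_succ f :
  coincidences f cyc_pred cyc_succ = \sum_c (pocc (mktuple f) c)%:R.
Proof. by rewrite sum_pocc; apply: eq_bigr => j _; rewrite !permE. Qed.

Lemma within_block_ss_pred f :
  within_block_ss
    (fun j => mean_indicator [seq f (s j) | s : {perm 'I_k} <- [:: 1%g; cyc_pred]]) =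
  cval (mktuple f) R.
Proof.
rewrite within_block_ss_mean // !big_cons !big_nil /= !coincidences_id.
rewrite (coincidencesC _ cyc_pred) coincidences_pred /cval.
(* the identity holds with [k^-1] as an atom, so no [k != 0] is needed *)
by set kinv := k%:R^-1; field.
Qed.

Lemma within_block_ss_pred_succ f :
  within_block_ss
    (fun j => mean_indicator [seq f (s j) | s : {perm 'I_k} <- [:: 1%g; cyc_pred; cyc_succ]]) =
  ctval (mktuple f) R.
Proof.
rewrite within_block_ss_mean // !big_cons !big_nil /= !coincidences_id.
rewrite (coincidencesC _ cyc_pred) (coincidencesC _ cyc_succ).
rewrite (coincidencesC _ cyc_succ cyc_pred).
rewrite coincidences_pred coincidences_succ coincidences_pred_succ /ctval.
by set kinv := k%:R^-1; field.
Qed.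

End WithinBlock.

Lemma trmx_col_mx1_mul2 (R : realFieldType) t :
  (col_mx (1%:M : 'M[R]_t) 1%:M)^T *m col_mx 1%:M 1%:M = 2%:M.
Proof. by rewrite tr_col_mx trmx1 mul_row_col !mulmx1 -raddfD. Qed.

Lemma trmx_col_mx1_mul3 (R : realFieldType) t :
  (col_mx (col_mx (1%:M : 'M[R]_t) 1%:M) 1%:M)^T *m col_mx (col_mx 1%:M 1%:M) 1%:M
  = 3%:M.
Proof.
rewrite tr_col_mx mul_row_col trmx_col_mx1_mul2 trmx1 mulmx1 -raddfD /=.
by congr (_%:M); ring.
Qed.

Unset Implicit Arguments.
Theorem proposition8 (R : realFieldType) (t b k : nat) (d : design t b k) :
  (forall lstar : k.-tuple 'I_t,
     (forall l : k.-tuple 'I_t, cval l R <= cval lstar R) ->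
     \tr (C_phi R d) <= b%:R * cval lstar R) /\
  (forall lstar : k.-tuple 'I_t,
     (forall l : k.-tuple 'I_t, ctval l R <= ctval lstar R) ->
     \tr (C_psi R d) <= b%:R * ctval lstar R).
Proof.
split=> lstar lstar_max.
- apply: (tr_info_mx_le (g := fun i j =>
    mean_indicator R [seq d i (s j) | s : {perm 'I_k} <- [:: 1%g; cyc_pred k]])).
    move=> r c; rewrite trmx_col_mx1_mul2 mpinv_scalar ?pnatr_eq0 //.
    rewrite mul_row_col !mulmx1 mul_mx_scalar !mxE /mean_indicator /=.
    by rewrite !big_cons big_nil perm1 permE addr0 mulrC.
  by move=> i; rewrite within_block_ss_pred; apply: lstar_max.
- apply: (tr_info_mx_le (g := fun i j =>
    mean_indicator R
      [seq d i (s j) | s : {perm 'I_k} <- [:: 1%g; cyc_pred k; cyc_succ k]])).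
    move=> r c; rewrite trmx_col_mx1_mul3 mpinv_scalar ?pnatr_eq0 //.
    rewrite !mul_row_col !mulmx1 mul_mx_scalar !mxE /mean_indicator /=.
    by rewrite !big_cons big_nil perm1 !permE addr0 addrA.
  by move=> i; rewrite within_block_ss_pred_succ; apply: lstar_max.
Qed.
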